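(* Let $A$ be a finite group of order $n\geq 2$. The number of subsets $S\subseteq A$ for which there exist subgroups $H,K$ of $A$ with $1<H\leq K<A$ such that $S\setminus K$ is a union of left $H$-cosets is at most $2^{3n/4+2(\log_2 n)^2}$. The same bound holds with right $H$-cosets in place of left $H$-cosets. *)

From HB Require Import structures.
From mathcomp Require Import all_boot all_order all_fingroup.
From Stdlib Require Import Reals.
Set Implicit Arguments. Unset Strict Implicit. Unset Printing Implicit Defensive.

Import GroupScope.

Definition union_lcosets (gT : finGroupType) (A H : {set gT}) (X : {set gT}) : bool :=
  [exists Cs : {set {set gT}}, (Cs \subset lcosets H A) && (X == cover Cs)].

Definition union_rcosets (gT : finGroupType) (A H : {set gT}) (X : {set gT}) : bool :=
  [exists Cs : {set {set gT}}, (Cs \subset rcosets H A) && (X == cover Cs)].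

Definition lgood (gT : finGroupType) (A : {group gT}) (S : {set gT}) : bool :=
  [exists H : {group gT}, exists K : {group gT},
     [&& (1%G : {group gT}) \proper H, H \subset K, K \proper A
       & union_lcosets A H (S :\: K)]].

Definition rgood (gT : finGroupType) (A : {group gT}) (S : {set gT}) : bool :=
  [exists H : {group gT}, exists K : {group gT},
     [&& (1%G : {group gT}) \proper H, H \subset K, K \proper A
       & union_rcosets A H (S :\: K)]].

Definition log2 (x : R) : R := (ln x / ln 2)%R.

Definition coset_bound (n : nat) : R :=
  Rpower 2 (3 * INR n / 4 + 2 * (log2 (INR n)) ^ 2)%R.

(* If S \ K is a union of left (or right) H-cosets with 1 < H <= K < A, pick
   a <> 1 in H: then S \ K is also a union of cosets of the cyclic group <[a]>.
   Such an S is determined by the data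
     (a, K, S :&: K, the <[a]>-cosets contained in S \ K).
   - Every subgroup of A is generated by m = trunc_log 2 n of its elements,
     because adding a generator outside a subgroup at least doubles it; so
     the pair (a, K) takes at most n ^ m.+1 values.
   - Given (a, K), as |<[a]>| >= 2 and |K| <= n/2 there are at most
     2 ^ (|K| + |A \ K|/2) <= 2 ^ (3n/4) choices for the rest.
   Finally n ^ m.+1 * 2 ^ (3n/4) <= 2 ^ (3n/4 + 2 (log2 n)^2) since
   m <= log2 n and log2 n >= 1. *)

From HB Require Import structures.
From mathcomp Require Import all_boot all_order all_fingroup zify.
From Stdlib Require Import Reals Lra Psatz.
(* Reals rebinds m ^ n on nat to Nat.pow; restore ssrnat's expn. *)
Import ssrnat.
Set Implicit Arguments. Unset Strict Implicit. Unset Printing Implicit Defensive.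
Import GroupScope.

Section Generation.
Variable gT : finGroupType.

Lemma card_proper_subgroup (H K : {group gT}) :
  H \proper K -> 2 * #|H| <= #|K|.
Proof.
move=> pHK; rewrite -(Lagrange (proper_sub pHK)) mulnC leq_mul2l indexg_gt1.
by case/andP: pHK => _ ->; rewrite orbT.
Qed.

(* Greedy generation: a subgroup K containing L is generated by L together
   with a list s of elements of K, each of which at least doubles the
   subgroup generated so far; hence 2 ^ size s * |L| <= |K|. *)
Lemma extend_generators (L K : {group gT}) : L \subset K ->
  exists s : seq gT, [/\ {subset s <= K}, K \subset <<L :|: [set x in s]>>
                       & 2 ^ size s * #|L| <= #|K|].
Proof.
move=> sLK; have [n lt_n] := ubnP (#|K| - #|L|).
elim: n L sLK lt_n => // n IH L sLK lt_n.
have sL_gen (X : {set gT}) : L \subset <<L :|: X>>.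
  exact: subset_trans (subsetUl L X) (sub_gen _).
have [eLK | pLK] := eqVproper sLK.
  by exists [::]; split; rewrite // -?eLK ?sL_gen // mul1n eLK.
case/properP: (pLK) => _ [x xK xL].
pose L' := <<L :|: [set x]>>%G.
have sL'K : L' \subset K by rewrite gen_subG subUset sLK sub1set xK.
have pLL' : L \proper L'.
  apply/properP; split; first exact: sL_gen.
  by exists x; rewrite // mem_gen // !inE eqxx orbT.
have doubleL := card_proper_subgroup pLL'.
have [|s [sK genK sizeK]] := IH L' sL'K.
  by have := proper_card pLL'; have := subset_leq_card sL'K; lia.
exists (x :: s); split.
- by move=> y; rewrite inE => /predU1P [-> // | /sK].
- apply: subset_trans genK _; rewrite gen_subG; apply/subsetP => y.
  rewrite !inE => /orP [yL' | ys]; last by rewrite mem_gen // !inE ys !orbT.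
  apply: subsetP yL'; apply: genS; apply: setUS.
  by rewrite sub1set !inE eqxx.
- rewrite expnSr -mulnA; apply: leq_trans sizeK.
  by rewrite leq_mul2l doubleL orbT.
Qed.

Definition generated_by m (f : {ffun 'I_m -> gT}) : {set gT} :=
  <<[set f i | i : 'I_m]>>.

Lemma subgroup_generated_by (A K : {group gT}) : K \subset A ->
  exists2 f : {ffun 'I_(trunc_log 2 #|A|) -> gT},
    f \in ffun_on A & generated_by f = K.
Proof.
move=> sKA; have [s [sK genK sizeK]] := extend_generators (sub1G K).
set m := trunc_log 2 #|A|.
have size_s : size s <= m.
  apply: trunc_log_max => //; apply: leq_trans (subset_leq_card sKA).
  by apply: leq_trans sizeK; rewrite cards1 muln1.
have nthK i : nth 1 s i \in K.
  by case: (ltnP i (size s)) => [/(mem_nth 1)/sK | /(nth_default 1) ->].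
exists [ffun i : 'I_m => nth 1 s i].
  by apply/ffun_onP => i; rewrite ffunE (subsetP sKA).
apply/eqP; rewrite eqEsubset gen_subG; apply/andP; split.
  by apply/subsetP => y /imsetP [i _ ->]; rewrite ffunE.
apply: subset_trans genK _; rewrite gen_subG subUset sub1G.
apply/subsetP => y; rewrite inE => ys; apply: mem_gen.
have lt_ym : index y s < m by apply: leq_trans size_s; rewrite index_mem.
by apply/imsetP; exists (Ordinal lt_ym); rewrite ?ffunE ?nth_index.
Qed.

End Generation.

Section BlockSystems.
Variables (T : finType) (c : T -> {set T}) (d : nat).
Hypothesis c_refl : forall x, x \in c x.
Hypothesis c_card : forall x, #|c x| = d.
Hypothesis c_triv : trivIset (c @: [set: T]).

(* The part of S outside K is a union of blocks. *)
Definition closed_off (K S : {set T}) : bool :=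
  [forall x in S :\: K, c x \subset S :\: K].

Definition blocks_in (X : {set T}) : {set {set T}} :=
  [set C in c @: [set: T] | C \subset X].

Lemma card_blocks_in X : #|blocks_in X| * d <= #|X|.
Proof.
have triv : trivIset (blocks_in X).
  by apply: trivIsetS c_triv; apply/subsetP => C; rewrite inE => /andP [].
have <- : #|cover (blocks_in X)| = (#|blocks_in X| * d)%N.
  rewrite -(eqP triv) (eq_bigr (fun _ => d)) ?sum_nat_const //.
  by move=> C; rewrite inE => /andP [/imsetP [x _ ->] _].
by apply/subset_leq_card/bigcupsP => C; rewrite inE => /andP [].
Qed.

(* A set S \subset A closed off K is determined by S :&: K and by the
   blocks it contains outside K. *)
Lemma card_closed_off (A K : {set T}) :
  #|[set S : {set T} | (S \subset A) && closed_off K S]|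
    <= 2 ^ (#|K| + #|blocks_in (A :\: K)|).
Proof.
pose glue (p : {set T} * {set {set T}}) := p.1 :|: cover p.2.
set G := [set S | _].
have sub : G \subset glue @: setX (powerset K) (powerset (blocks_in (A :\: K))).
  apply/subsetP => S; rewrite inE => /andP [sSA /forallP closedS].
  apply/imsetP; exists (S :&: K, blocks_in (S :\: K)).
    rewrite inE /= !powersetE subsetIr /=.
    by apply/subsetP => C; rewrite !inE => /andP [-> /subset_trans ->] //; apply: setSD.
  apply/eqP; rewrite eqEsubset subUset subsetIl /=; apply/andP; split.
    apply/subsetP => y yS; have [yK | yNK] := boolP (y \in K).
      by rewrite !inE yS yK.
    have ySK : y \in S :\: K by rewrite inE yNK yS.
    apply/setUP; right; apply/bigcupP; exists (c y) => //.
    by rewrite inE imset_f ?inE //= (implyP (closedS y) ySK).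
  apply/bigcupsP => C; rewrite inE => /andP [_ /subset_trans ->] //.
  exact: subsetDl.
apply: leq_trans (subset_leq_card sub) _; apply: leq_trans (leq_imset_card _ _) _.
by rewrite cardsX !card_powerset expnD.
Qed.

Lemma card_closed_off_half (A K : {set T}) :
  1 < d -> K \subset A -> 2 * #|K| <= #|A| ->
  #|[set S : {set T} | (S \subset A) && closed_off K S]| <= 2 ^ (3 * #|A| %/ 4).
Proof.
move=> d_gt1 sKA halfK; apply: leq_trans (card_closed_off A K) _.
rewrite leq_pexp2l //.
have blocks2 : #|blocks_in (A :\: K)| * 2 <= #|A :\: K|.
  by apply: leq_trans (card_blocks_in _); rewrite leq_mul2l d_gt1 orbT.
move: blocks2; rewrite cardsD (setIidPr sKA); lia.
Qed.

End BlockSystems.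

Lemma card_bigcup_le (T I : finType) (P : {set I}) (F : I -> {set T}) :
  #|\bigcup_(i in P) F i| <= \sum_(i in P) #|F i|.
Proof.
apply: (big_rec2 (fun (U : {set T}) s => #|U| <= s)) => [|i U s _ IH].
  by rewrite cards0.
by rewrite cardsU; apply: leq_trans (leq_subr _ _) _; rewrite leq_add2l.
Qed.

Section CosetCounting.
(* For each a, c a is a partition of gT into blocks of size #[a]: the left
   or the right cosets of <[a]>. *)
Variables (gT : finGroupType) (A : {group gT}) (c : gT -> gT -> {set gT}).
Hypothesis c_refl : forall a x, x \in c a x.
Hypothesis c_card : forall a x, #|c a x| = #[a].
Hypothesis c_triv : forall a, trivIset (c a @: [set: gT]).

Definition coset_closed (S : {set gT}) : bool :=
  [exists a in A, exists K : {group gT},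
     [&& a != 1, K \proper A & closed_off (c a) K S]].

Definition closed_fiber m (p : gT * {ffun 'I_m -> gT}) : {set {set gT}} :=
  [set S : {set gT} | (S \subset A) && [&& p.1 != 1, generated_by p.2 \proper A
                              & closed_off (c p.1) (generated_by p.2) S]].

(* Each fiber is empty unless a <> 1 and K < A, in which case the blocks
   (of size #[a] >= 2) and K (of index >= 2) satisfy card_closed_off_half. *)
Lemma card_closed_fiber m p : #|closed_fiber (m := m) p| <= 2 ^ (3 * #|A| %/ 4).
Proof.
case: p => a f; have [/andP [a1 pKA] | degenerate] :=
  boolP ((a != 1) && (generated_by f \proper A)); last first.
  rewrite (_ : closed_fiber _ = set0) ?cards0 //; apply/setP => S.
  by rewrite !inE /=; case: (a != 1) (generated_by f \proper A) degenerate => [] [];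
    rewrite ?andbF.
pose K := <<[set f i | i : 'I_m]>>%G.
apply: leq_trans
  (card_closed_off_half (c_refl a) (c_card a) (c_triv a) (K := generated_by f) _ _ _).
- by apply/subset_leq_card/subsetP => S; rewrite !inE a1 pKA /= => /andP [-> ->].
- by rewrite order_gt1.
- exact: proper_sub pKA.
- exact: (card_proper_subgroup (H := K) pKA).
Qed.

Lemma card_coset_closed :
  #|[set S : {set gT} | (S \subset A) && coset_closed S]|
    <= #|A| ^ (trunc_log 2 #|A|).+1 * 2 ^ (3 * #|A| %/ 4).
Proof.
set m := trunc_log 2 #|A|.
pose I := setX A [set f : {ffun 'I_m -> gT} | f \in ffun_on A].
have cover_fibers : [set S : {set gT} | (S \subset A) && coset_closed S]
    \subset \bigcup_(p in I) closed_fiber p.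
  apply/subsetP => S; rewrite inE => /andP [sSA /existsP [a /andP [aA]]].
  case/existsP => K /and3P [a1 pKA closedS].
  have [f fA defK] := subgroup_generated_by (proper_sub pKA).
  apply/bigcupP; exists (a, f); first by rewrite !inE aA.
  by rewrite inE /= sSA a1 defK pKA.
apply: leq_trans (subset_leq_card cover_fibers) _.
apply: leq_trans (card_bigcup_le _ _) _.
have -> : (#|A| ^ m.+1)%N = #|I|.
  by rewrite cardsX cardsE card_ffun_on card_ord expnS.
by rewrite -sum_nat_const; apply: leq_sum => p _; apply: card_closed_fiber.
Qed.

Lemma coset_closed_of_cover (H K : {group gT}) (co : gT -> {set gT})
    (Cs : {set {set gT}}) (S : {set gT}) :
  (forall a y z, a \in H -> y \in co z -> c a y \subset co z) ->
  (1%G : {group gT}) \proper H -> H \subset K -> K \proper A -> Cs \subset co @: A ->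
  S :\: K = cover Cs -> coset_closed S.
Proof.
move=> co_refines ntH sHK pKA sCs defSK.
have [_ [a aH]] := properP ntH; rewrite inE => a1.
have aA : a \in A by rewrite (subsetP (proper_sub pKA)) ?(subsetP sHK).
apply/existsP; exists a; rewrite aA; apply/existsP; exists K.
rewrite a1 pKA; apply/forallP => x; apply/implyP; rewrite defSK.
case/bigcupP => C CCs xC; apply: subset_trans (bigcup_sup C CCs).
by have /imsetP [z _ defC] := subsetP sCs C CCs; rewrite defC in xC *; apply: co_refines.
Qed.

End CosetCounting.

Lemma lcosets_triv (gT : finGroupType) (H : {group gT}) :
  trivIset ((fun x => x *: H) @: [set: gT]).
Proof.
apply/trivIsetP => C D /imsetP [x _ ->] /imsetP [y _ ->]; apply: contraNT.
by rewrite -setI_eq0 => /set0Pn [z /setIP [/lcoset_eqP <- /lcoset_eqP <-]].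
Qed.

Lemma rcosets_triv (gT : finGroupType) (H : {group gT}) :
  trivIset ((fun x => H :* x) @: [set: gT]).
Proof.
apply/trivIsetP => C D /imsetP [x _ ->] /imsetP [y _ ->]; apply: contraNT.
by rewrite -setI_eq0 => /set0Pn [z /setIP [/rcoset_eqP <- /rcoset_eqP <-]].
Qed.

Definition lcyclic (gT : finGroupType) (a x : gT) : {set gT} := x *: <[a]>.
Definition rcyclic (gT : finGroupType) (a x : gT) : {set gT} := <[a]> :* x.

Lemma lgood_coset_closed (gT : finGroupType) (A : {group gT}) S :
  lgood A S -> coset_closed A (@lcyclic gT) S.
Proof.
case/existsP=> H /existsP [K /and4P [ntH sHK pKA /existsP [Cs]]].
case/andP=> sCs /eqP defSK.
have sCs' : Cs \subset [set z *: H | z in A].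
  by apply: subset_trans sCs _; apply/subsetP => C /lcosetsP [z zA ->]; apply: imset_f.
apply: (coset_closed_of_cover _ ntH sHK pKA sCs' defSK).
move=> a y z aH yHz.
by rewrite -(lcoset_eqP yHz) /lcyclic lcosetS cycle_subG.
Qed.

Lemma rgood_coset_closed (gT : finGroupType) (A : {group gT}) S :
  rgood A S -> coset_closed A (@rcyclic gT) S.
Proof.
case/existsP=> H /existsP [K /and4P [ntH sHK pKA /existsP [Cs]]].
case/andP=> sCs /eqP defSK.
have sCs' : Cs \subset [set H :* z | z in A].
  by apply: subset_trans sCs _; apply/subsetP => C /rcosetsP [z zA ->]; apply: imset_f.
apply: (coset_closed_of_cover _ ntH sHK pKA sCs' defSK).
move=> a y z aH yHz.
by rewrite -(rcoset_eqP yHz) /rcyclic rcosetS cycle_subG.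
Qed.

Section RealBound.
Local Open Scope R_scope.

Lemma INR_expn (a b : nat) : INR (a ^ b)%N = INR a ^ b.
Proof. by elim: b => [|b IH] //; rewrite expnS -multE mult_INR IH. Qed.

Lemma ln_nondecreasing x y : 0 < x -> x <= y -> ln x <= ln y.
Proof. by move=> x_gt0 [/(ln_increasing _ _ x_gt0)/Rlt_le | ->]; [|apply: Rle_refl]. Qed.

Lemma Rpower_log2 x : 0 < x -> Rpower 2 (log2 x) = x.
Proof.
move=> x_gt0; have ln2_gt0 : 0 < ln 2 by have := ln_lt_2; lra.
rewrite /Rpower /log2 (_ : ln x / ln 2 * ln 2 = ln x) ?exp_ln //; field; lra.
Qed.

Lemma log2_bounds n : (2 <= n)%N ->
  1 <= log2 (INR n) /\ INR (trunc_log 2 n) <= log2 (INR n).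
Proof.
move=> n_ge2; have ln2_gt0 : 0 < ln 2 by have := ln_lt_2; lra.
have n2 : 2 <= INR n by have := le_INR 2 n (leP n_ge2); rewrite /= => ?; lra.
have lnn : ln (INR n) = log2 (INR n) * ln 2 by rewrite /log2; field; lra.
have pow_le : 2 ^ trunc_log 2 n <= INR n.
  by rewrite -(INR_expn 2) /=; apply/le_INR/leP/trunc_logP; lia.
split.
  by have := ln_nondecreasing (Rlt_0_2) n2; rewrite lnn; nra.
have := ln_nondecreasing (pow_lt _ (trunc_log 2 n) Rlt_0_2) pow_le.
by rewrite ln_pow ?lnn; [nra | lra].
Qed.

Lemma coset_bound_ge n : (2 <= n)%N ->
  INR (n ^ (trunc_log 2 n).+1 * 2 ^ (3 * n %/ 4))%N <= coset_bound n.
Proof.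
move=> n_ge2; have [L_ge1 mL] := log2_bounds n_ge2.
have n_gt0 : 0 < INR n by apply/lt_0_INR/ltP; lia.
have k4 : INR (4 * (3 * n %/ 4)) <= INR (3 * n) by apply/le_INR/leP; lia.
rewrite -!multE !mult_INR /= in k4.
set m := trunc_log 2 n in mL *; set k := (3 * n %/ 4)%N in k4 *.
set L := log2 (INR n) in L_ge1 mL *.
rewrite -multE mult_INR !INR_expn (_ : INR 2 = 2) //.
rewrite -(@Rpower_pow _ _ n_gt0) -(@Rpower_pow _ _ Rlt_0_2) -{1}(Rpower_log2 n_gt0).
rewrite Rpower_mult -Rpower_plus; apply: Rle_Rpower; first lra.
rewrite -/L S_INR.
have : L * (INR m + 1) <= L * (L + 1) by apply: Rmult_le_compat_l; lra.
nra.
Qed.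

End RealBound.

Lemma card_coset_closed_bound (gT : finGroupType) (A : {group gT})
    (c : gT -> gT -> {set gT}) (good : {set gT} -> bool) :
  (2 <= #|A|)%N ->
  (forall a x, x \in c a x) -> (forall a x, #|c a x| = #[a]) ->
  (forall a, trivIset (c a @: [set: gT])) ->
  (forall S, good S -> coset_closed A c S) ->
  (INR #|[set S : {set gT} | (S \subset A) && good S]| <= coset_bound #|A|)%R.
Proof.
move=> A_ge2 c_refl c_card c_triv goodP.
apply: Rle_trans (coset_bound_ge A_ge2); apply/le_INR/leP.
apply: leq_trans (card_coset_closed A c_refl c_card c_triv).
by apply/subset_leq_card/subsetP => S; rewrite !inE => /andP [-> /goodP].
Qed.

Theorem lemma5p1 (gT : finGroupType) (A : {group gT}) (hn : (2 <= #|A|)%N) :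
  (INR (#|[set S : {set gT} | (S \subset A) && lgood A S]|) <= coset_bound (#|A|))%R /\
  (INR (#|[set S : {set gT} | (S \subset A) && rgood A S]|) <= coset_bound (#|A|))%R.
Proof.
split.
- apply: (@card_coset_closed_bound gT A (@lcyclic gT) (lgood A)) hn _ _ _ _.
  + by move=> a x; apply: lcoset_refl.
  + by move=> a x; rewrite /lcyclic card_lcoset.
  + by move=> a; apply: lcosets_triv.
  + exact: lgood_coset_closed.
- apply: (@card_coset_closed_bound gT A (@rcyclic gT) (rgood A)) hn _ _ _ _.
  + by move=> a x; apply: rcoset_refl.
  + by move=> a x; rewrite /rcyclic card_rcoset.
  + by move=> a; apply: rcosets_triv.
  + exact: rgood_coset_closed.
Qed.
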